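(* Let $\mathbf{Q}=\langle Q,\vee,\cdot,\bot,e\rangle$ be a quantale, $X,Y$ non-empty sets, and $p\in Q^{X\times Y}$ strong, i.e. there is an injective map $\varepsilon:Y\to X$ such that $p(\varepsilon(y),y)=e$ for all $y\in Y$ and $p(\varepsilon(y_1),y_2)=\bot$ for all $y_1\ne y_2$ in $Y$. Let $H_p:Q^X\to Q^Y$, $H_pf(y)=\bigvee_{x\in X}f(x)\cdot p(x,y)$, and $\Lambda_p:Q^Y\to Q^X$, $\Lambda_pg(x)=\bigwedge_{y\in Y}g(y)/p(x,y)$. Then $H_p\circ\Lambda_p=\operatorname{id}_{Q^Y}$; consequently $H_p$ is surjective and $\Lambda_p$ is injective.
   Context: A quantale is a structure $\langle Q,\vee,\cdot,\bot,e\rangle$ where $\langle Q,\vee,\bot\rangle$ is a complete lattice, $\langle Q,\cdot,e\rangle$ is a monoid, and multiplication distributes over arbitrary joins on both sides; $/$ is the right residuum: $x\cdot y\le z\iff x\le z/y$. $Q^X$ denotes the set of functions $X\to Q$ with the pointwise order. *)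

From Stdlib Require Import FunctionalExtensionality.

Record Quantale := {
  qcar :> Type;
  qle : qcar -> qcar -> Prop;
  qsup : (qcar -> Prop) -> qcar;
  qmul : qcar -> qcar -> qcar;
  qe : qcar;
  qle_refl : forall x, qle x x;
  qle_trans : forall x y z, qle x y -> qle y z -> qle x z;
  qle_antisym : forall x y, qle x y -> qle y x -> x = y;
  qsup_ub : forall (S : qcar -> Prop) x, S x -> qle x (qsup S);
  qsup_least : forall (S : qcar -> Prop) z,
      (forall x, S x -> qle x z) -> qle (qsup S) z;
  qmulA : forall x y z, qmul x (qmul y z) = qmul (qmul x y) z;
  qmul1l : forall x, qmul qe x = x;
  qmul1r : forall x, qmul x qe = x;
  qmul_supl : forall (S : qcar -> Prop) y,
      qmul (qsup S) y = qsup (fun z => exists x, S x /\ z = qmul x y);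
  qmul_supr : forall x (S : qcar -> Prop),
      qmul x (qsup S) = qsup (fun z => exists y, S y /\ z = qmul x y)
}.

Arguments qle {_}. Arguments qsup {_}. Arguments qmul {_}. Arguments qe {_}.

Definition qbot (Q : Quantale) : Q := qsup (fun _ => False).

Definition qinf {Q : Quantale} (S : Q -> Prop) : Q :=
  qsup (fun x => forall y, S y -> qle x y).

(* right residuum: z / y = \/ {x | x * y <= z}, so x*y <= z <-> x <= z/y *)
Definition qrdiv {Q : Quantale} (z y : Q) : Q :=
  qsup (fun x => qle (qmul x y) z).

Definition strong {Q : Quantale} {X Y : Type} (p : X -> Y -> Q) : Prop :=
  exists eps : Y -> X,
    (forall y1 y2, eps y1 = eps y2 -> y1 = y2) /\
    (forall y, p (eps y) y = qe) /\
    (forall y1 y2, y1 <> y2 -> p (eps y1) y2 = qbot Q).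

Definition Hp {Q : Quantale} {X Y : Type} (p : X -> Y -> Q) (f : X -> Q) : Y -> Q :=
  fun y => qsup (fun q => exists x, q = qmul (f x) (p x y)).

Definition Lp {Q : Quantale} {X Y : Type} (p : X -> Y -> Q) (g : Y -> Q) : X -> Q :=
  fun x => qinf (fun q => exists y, q = qrdiv (g y) (p x y)).

(** Writing [H] for [Hp p] and [Λ] for [Lp p], the adjunction [x * y <= z <-> x <= z / y]
    gives [H (Λ g) <= g] for every kernel [p].  Conversely, for a strong kernel the point
    [ε y] already recovers [g y]: [p (ε y) y = e] and [p (ε y) y' = ⊥] for [y' <> y], so
    [g y <= g y' / p (ε y) y'] for every [y'], i.e. [g y <= Λ g (ε y)], and the term of index
    [ε y] in the join [H (Λ g) y] is [Λ g (ε y) * e >= g y]. *)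
From Stdlib Require Import Classical FunctionalExtensionality.

Section QuantaleFacts.
Variable Q : Quantale.

Lemma qle0x (a : Q) : qle (qbot Q) a.
Proof. apply qsup_least; intros x []. Qed.

Lemma qmulx0 (a : Q) : qmul a (qbot Q) = qbot Q.
Proof.
  unfold qbot; rewrite qmul_supr.
  apply qle_antisym; apply qsup_least.
  - intros x [y [[] _]].
  - intros x [].
Qed.

Lemma qmul_monol (a b c : Q) : qle a b -> qle (qmul a c) (qmul b c).
Proof.
  intros Hab.
  assert (Hb : b = qsup (fun z => z = a \/ z = b)).
  { apply qle_antisym.
    - apply qsup_ub; auto.
    - apply qsup_least; intros x [-> | ->]; auto using qle_refl. }
  rewrite Hb, qmul_supl. apply qsup_ub. exists a; auto.
Qed.

Lemma qmul_rdiv_le (z y : Q) : qle (qmul (qrdiv z y) y) z.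
Proof.
  unfold qrdiv; rewrite qmul_supl.
  apply qsup_least; intros w [x [Hx ->]]; exact Hx.
Qed.

Lemma qle_rdiv (x y z : Q) : qle (qmul x y) z -> qle x (qrdiv z y).
Proof. intros H; apply qsup_ub; exact H. Qed.

Lemma qinf_lb (S : Q -> Prop) (y : Q) : S y -> qle (qinf S) y.
Proof. intros Hy; apply qsup_least; intros x Hx; apply Hx, Hy. Qed.

Lemma qinf_glb (S : Q -> Prop) (z : Q) : (forall y, S y -> qle z y) -> qle z (qinf S).
Proof. intros H; apply qsup_ub; exact H. Qed.

End QuantaleFacts.

Section Kernel.
Variables (Q : Quantale) (X Y : Type) (p : X -> Y -> Q).

Lemma Hp_Lp_le (g : Y -> Q) (y : Y) : qle (Hp p (Lp p g) y) (g y).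
Proof.
  apply qsup_least; intros q [x ->].
  eapply qle_trans; [apply qmul_monol | apply qmul_rdiv_le].
  apply qinf_lb; exists y; reflexivity.
Qed.

Variable eps : Y -> X.
Hypothesis p_diag : forall y, p (eps y) y = qe.
Hypothesis p_offdiag : forall y1 y2, y1 <> y2 -> p (eps y1) y2 = qbot Q.

Lemma le_Lp_eps (g : Y -> Q) (y : Y) : qle (g y) (Lp p g (eps y)).
Proof.
  apply qinf_glb; intros q [y' ->]; apply qle_rdiv.
  destruct (classic (y = y')) as [<- | Hne].
  - rewrite p_diag, qmul1r; apply qle_refl.
  - rewrite (p_offdiag _ _ Hne), qmulx0; apply qle0x.
Qed.

Lemma Hp_Lp_id (g : Y -> Q) : Hp p (Lp p g) = g.
Proof.
  apply functional_extensionality; intros y.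
  apply qle_antisym; [apply Hp_Lp_le |].
  eapply qle_trans; [| apply qsup_ub; exists (eps y); reflexivity].
  rewrite p_diag, qmul1r; apply le_Lp_eps.
Qed.

End Kernel.

Theorem theorem4p4 (Q : Quantale) (X Y : Type) (hX : inhabited X) (hY : inhabited Y)
  (p : X -> Y -> Q) (hp : strong p) :
  (forall g : Y -> Q, Hp p (Lp p g) = g) /\
  (forall g : Y -> Q, exists f : X -> Q, Hp p f = g) /\
  (forall g1 g2 : Y -> Q, Lp p g1 = Lp p g2 -> g1 = g2).
Proof.
  destruct hp as [eps [_ [p_diag p_offdiag]]].
  pose proof (Hp_Lp_id Q X Y p eps p_diag p_offdiag) as HL.
  split; [exact HL | split].
  - intros g; exists (Lp p g); apply HL.
  - intros g1 g2 E; rewrite <- (HL g1), <- (HL g2), E; reflexivity.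
Qed.
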